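(* Let $\Re$ be a commutative Krasner hyperring with identity $1\ne 0$, let $\phi:L(\Re)\to L(\Re)\cup\{\emptyset\}$ be a function, and let $T$ be a proper hyperideal of $\Re$ that is $\phi$-prime. If $T$ is not prime, then $T^2\subseteq\phi(T)$. Equivalently, if $T^2\not\subseteq\phi(T)$, then $T$ is prime.
   Context: Krasner hyperring: $(\Re,\oplus)$ canonical hypergroup (associative commutative hyperoperation, scalar zero $0$, unique inverses, reversibility), $(\Re,\circ)$ commutative semigroup with identity $1\ne0$, $0$ absorbing, $\circ$ distributive over $\oplus$. Hyperideals: nonempty $N$ with $a\oplus(-b)\subseteq N$, $r\circ a\in N$; $L(\Re)$ is the set of hyperideals; $T^2$ is the hyperideal generated by $\{a\circ b: a,b\in T\}$. $T$ is prime if $a\circ b\in T$ implies $a\in T$ or $b\in T$; $T$ is $\phi$-prime if $a\circ b\in T$ and $a\circ b\notin\phi(T)$ imply $a\in T$ or $b\in T$. *)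

From Stdlib Require Import Classical.

Set Implicit Arguments.

Definition set (R : Type) := R -> Prop.
Definition subset {R : Type} (A B : set R) : Prop := forall x, A x -> B x.

Definition hset_l {R : Type} (hadd : R -> R -> set R) (X : set R) (c : R) : set R :=
  fun z => exists x, X x /\ hadd x c z.
Definition hset_r {R : Type} (hadd : R -> R -> set R) (a : R) (Y : set R) : set R :=
  fun z => exists y, Y y /\ hadd a y z.

Record KrasnerHyperring := {
  carrier :> Type;
  hadd : carrier -> carrier -> set carrier;
  hzero : carrier;
  hneg : carrier -> carrier;
  hmul : carrier -> carrier -> carrier;
  hone : carrier;
  hadd_nonempty : forall a b, exists z, hadd a b z;
  hadd_assoc : forall a b c,
      hset_l hadd (hadd a b) c = hset_r hadd a (hadd b c);
  hadd_comm : forall a b, hadd a b = hadd b a;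
  hadd_zero : forall a z, hadd a hzero z <-> z = a;
  hneg_inv : forall a, hadd a (hneg a) hzero;
  hneg_unique : forall a b, hadd a b hzero -> b = hneg a;
  hadd_rev : forall a b c, hadd a b c -> hadd c (hneg b) a;
  hmul_assoc : forall a b c, hmul a (hmul b c) = hmul (hmul a b) c;
  hmul_comm : forall a b, hmul a b = hmul b a;
  hmul_one : forall a, hmul hone a = a;
  hmul_zero : forall a, hmul hzero a = hzero;
  hone_neq_zero : hone <> hzero;
  (* distributivity: a o (b (+) c) = (a o b) (+) (a o c) *)
  hmul_distr : forall a b c z,
      (exists w, hadd b c w /\ z = hmul a w) <-> hadd (hmul a b) (hmul a c) z
}.

Section Ideals.
Context {R : KrasnerHyperring}.

Definition hyperideal (N : set R) : Prop :=
  (exists x, N x) /\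
  (forall a b, N a -> N b -> subset (hadd R a (hneg R b)) N) /\
  (forall r a, N a -> N (hmul R r a)).

Definition proper (T : set R) : Prop := exists x, ~ T x.

Definition hsq (T : set R) : set R :=
  fun x => forall N, hyperideal N ->
    (forall a b, T a -> T b -> N (hmul R a b)) -> N x.

Definition prime (T : set R) : Prop :=
  forall a b, T (hmul R a b) -> T a \/ T b.

(* phi : L(R) -> L(R) u {emptyset}: a map on sets sending hyperideals to
   hyperideals or to the empty set. *)
Definition phi_map (phi : set R -> set R) : Prop :=
  forall I, hyperideal I -> hyperideal (phi I) \/ (forall x, ~ phi I x).

Definition phi_prime (phi : set R -> set R) (T : set R) : Prop :=
  forall a b, T (hmul R a b) -> ~ phi T (hmul R a b) -> T a \/ T b.
End Ideals.

From Stdlib Require Import Classical.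

(* If T is not prime, pick a, b outside T with ab in T; phi-primality forces
   ab in phi(T), so (a, b) is a phi-twin zero and phi(T) is a hyperideal.
   For a twin zero and t in T, at lies in phi(T): otherwise, for z in b + t,
   az lies in ab + at, hence in T but not in phi(T), forcing z in T and then
   b in T.  Perturbing a by s in T gives another twin zero (z, b) with z in
   a + s, and st lies in zt - at, which is contained in phi(T).  So phi(T)
   contains all products of elements of T, hence contains T^2. *)

Section HyperidealClosure.
Context {R : KrasnerHyperring}.

Lemma hneg_involutive (c : R) : hneg R (hneg R c) = c.
Proof. symmetry. apply hneg_unique. rewrite hadd_comm. apply hneg_inv. Qed.

Lemma hmul_distr_l (c : R) {x y z : R} :
  hadd R x y z -> hadd R (hmul R c x) (hmul R c y) (hmul R c z).
Proof. intros Hz. apply hmul_distr. exists z. auto. Qed.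

Lemma hmul_distr_r (c : R) {x y z : R} :
  hadd R x y z -> hadd R (hmul R x c) (hmul R y c) (hmul R z c).
Proof. rewrite !(hmul_comm R _ c). apply hmul_distr_l. Qed.

Context {N : set R} (HN : hyperideal N).

Lemma hyperideal_zero : N (hzero R).
Proof. destruct HN as [[x Hx] [Hsub _]]. exact (Hsub x x Hx Hx _ (hneg_inv R x)). Qed.

Lemma hyperideal_neg {c : R} : N c -> N (hneg R c).
Proof.
  intros Hc. destruct HN as [_ [Hsub _]].
  apply (Hsub _ _ hyperideal_zero Hc).
  rewrite hadd_comm. apply hadd_zero. reflexivity.
Qed.

Lemma hyperideal_hadd {x y z : R} : hadd R x y z -> N x -> N y -> N z.
Proof.
  intros Hz Hx Hy. destruct HN as [_ [Hsub _]].
  apply (Hsub _ _ Hx (hyperideal_neg Hy)). rewrite hneg_involutive. exact Hz.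
Qed.

Lemma hyperideal_hadd_cancel_r {x y z : R} : hadd R x y z -> N z -> N y -> N x.
Proof.
  intros Hz Nz Ny. apply (hyperideal_hadd (hadd_rev R x y z Hz) Nz).
  exact (hyperideal_neg Ny).
Qed.

Lemma hyperideal_hadd_cancel_l {x y z : R} : hadd R x y z -> N z -> N x -> N y.
Proof. rewrite hadd_comm. apply hyperideal_hadd_cancel_r. Qed.

Lemma hyperideal_mull (r : R) {a : R} : N a -> N (hmul R r a).
Proof. destruct HN as [_ [_ Hmul]]. apply Hmul. Qed.

Lemma hyperideal_mulr (r : R) {a : R} : N a -> N (hmul R a r).
Proof. rewrite hmul_comm. apply hyperideal_mull. Qed.

End HyperidealClosure.


Section TwinZero.
Context {R : KrasnerHyperring} {phi : set R -> set R} {T : set R}.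

Definition phi_twin_zero (a b : R) : Prop :=
  T (hmul R a b) /\ phi T (hmul R a b) /\ ~ T a /\ ~ T b.

Context (phi_primeT : phi_prime phi T).

Lemma exists_phi_twin_zero : ~ prime T -> exists a b, phi_twin_zero a b.
Proof.
  intros Hnprime. apply NNPP. intros Hno. apply Hnprime. intros a b Hab.
  destruct (classic (T a)) as [|Na]; [now left|].
  destruct (classic (T b)) as [|Nb]; [now right|].
  destruct (classic (phi T (hmul R a b))) as [Pab|Pab].
  - exfalso. apply Hno. exists a, b. now repeat split.
  - exact (phi_primeT a b Hab Pab).
Qed.

Lemma phi_twin_zero_sym {a b : R} : phi_twin_zero a b -> phi_twin_zero b a.
Proof. unfold phi_twin_zero. rewrite hmul_comm. tauto. Qed.

Lemma hyperideal_phi_of_twin_zero {a b : R} :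
  phi_map phi -> hyperideal T -> phi_twin_zero a b -> hyperideal (phi T).
Proof.
  intros Hphi HT [_ [Pab _]].
  destruct (Hphi T HT) as [|Hempty]; [assumption|].
  exfalso. exact (Hempty _ Pab).
Qed.

Context (HT : hyperideal T) (HP : hyperideal (phi T)).

Lemma phi_twin_zero_mull {a b t : R} :
  phi_twin_zero a b -> T t -> phi T (hmul R a t).
Proof.
  intros [Tab [Pab [Na Nb]]] Tt.
  apply NNPP. intros Pat.
  destruct (hadd_nonempty R b t) as [z Hz].
  pose proof (hmul_distr_l a Hz) as Haz.
  assert (Taz : T (hmul R a z)) by exact (hyperideal_hadd HT Haz Tab (hyperideal_mull HT a Tt)).
  assert (Paz : ~ phi T (hmul R a z)).
  { intros Paz. exact (Pat (hyperideal_hadd_cancel_l HP Haz Paz Pab)). }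
  destruct (phi_primeT a z Taz Paz) as [Ta|Tz]; [contradiction|].
  exact (Nb (hyperideal_hadd_cancel_r HT Hz Tz Tt)).
Qed.

Lemma phi_twin_zero_hadd_l {a b s z : R} :
  phi_twin_zero a b -> T s -> hadd R a s z -> phi_twin_zero z b.
Proof.
  intros Htwin Ts Hz.
  pose proof Htwin as [Tab [Pab [Na Nb]]].
  pose proof (hmul_distr_r b Hz) as Hzb.
  assert (Psb : phi T (hmul R s b)).
  { rewrite hmul_comm. exact (phi_twin_zero_mull (phi_twin_zero_sym Htwin) Ts). }
  repeat split.
  - exact (hyperideal_hadd HT Hzb Tab (hyperideal_mulr HT b Ts)).
  - exact (hyperideal_hadd HP Hzb Pab Psb).
  - intros Tz. exact (Na (hyperideal_hadd_cancel_r HT Hz Tz Ts)).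
  - exact Nb.
Qed.

Lemma phi_twin_zero_mul_in_phi {a b s t : R} :
  phi_twin_zero a b -> T s -> T t -> phi T (hmul R s t).
Proof.
  intros Htwin Ts Tt.
  destruct (hadd_nonempty R a s) as [z Hz].
  pose proof (phi_twin_zero_mull (phi_twin_zero_hadd_l Htwin Ts Hz) Tt) as Pzt.
  pose proof (phi_twin_zero_mull Htwin Tt) as Pat.
  exact (hyperideal_hadd_cancel_l HP (hmul_distr_r t Hz) Pzt Pat).
Qed.

End TwinZero.

Arguments phi_twin_zero {R} phi T a b.

Theorem mainTheorem6 (R : KrasnerHyperring) (phi : set R -> set R) (T : set R) :
  phi_map phi -> hyperideal T -> proper T -> phi_prime phi T ->
  ~ prime T -> subset (hsq T) (phi T).
Proof.
  intros Hphi HT _ Hpp Hnprime.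
  destruct (exists_phi_twin_zero Hpp Hnprime) as [a [b Htwin]].
  pose proof (hyperideal_phi_of_twin_zero Hphi HT Htwin) as HP.
  intros x Hx. apply Hx; [exact HP|].
  intros s t Ts Tt. exact (phi_twin_zero_mul_in_phi Hpp HT HP Htwin Ts Tt).
Qed.
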